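(* Let $E$ be any subset of the equations $\{(\mathsf e),(\mathsf c),(!\mathsf e),(!\mathsf c),(!\mathsf a1),(!\mathsf a2)\}$ and let $\mathcal V$ be the variety of integral interior $r\ell u$-groupoids satisfying all equations in $E$. Then $\mathcal V$ has the finite embeddability property.
   Context: A unital groupoid is a set with a (not necessarily associative) binary operation $\cdot$ and a two-sided unit $1$. An $r\ell u$-groupoid is an algebra $(A,\wedge,\vee,\cdot,\backslash,/,1)$ such that $(A,\wedge,\vee)$ is a lattice with order $\le$, $(A,\cdot,1)$ is a unital groupoid, and $x\cdot y\le z\iff y\le x\backslash z\iff x\le z/y$. An interior $r\ell u$-groupoid additionally has a unary operation $!$ with $1\le !1$, $!x\cdot !y\le !(x\cdot y)$, $!x\le x$, $!x\le !!x$, and $x\le y\Rightarrow !x\le !y$. It is integral if $x\le 1$ for all $x$. Equations: $(\mathsf e)$ $x\cdot y\le y\cdot x$; $(\mathsf c)$ $x\le x\cdot x$; $(!\mathsf c)$ $!x\le !x\cdot !x$; $(!\mathsf e)$ $!x\cdot y=y\cdot !x$; $(!\mathsf a1)$ $!x\cdot(y\cdot z)=(!x\cdot y)\cdot z$; $(!\mathsf a2)$ $x\cdot(y\cdot !z)=(x\cdot y)\cdot !z$. A partial subalgebra of an algebra $\mathbf C$ is a subset $B$ with $f^{\mathbf B}(\vec b)=f^{\mathbf C}(\vec b)$ if this lies in $B$ and undefined otherwise. An embedding of a partial algebra $\mathbf B$ into an algebra $\mathbf D$ is an injective map $h$ with $h(f^{\mathbf B}(\vec b))=f^{\mathbf D}(h(\vec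 b))$ whenever the left side is defined. A class $\mathcal K$ has the finite embeddability property (FEP) if every finite partial subalgebra of a member of $\mathcal K$ embeds into a finite member of $\mathcal K$. *)

From Stdlib Require Import List.
Set Implicit Arguments.

Record IGroupoid := {
  car  :> Type;
  meet : car -> car -> car;
  join : car -> car -> car;
  mul  : car -> car -> car;
  ldiv : car -> car -> car;
  rdiv : car -> car -> car;
  one  : car;
  bang : car -> car
}.

Section Laws.
Variable A : IGroupoid.

Definition le (x y : A) : Prop := meet A x y = x.

Definition is_lattice : Prop :=
  (forall x y z, meet A x (meet A y z) = meet A (meet A x y) z) /\
  (forall x y z, join A x (join A y z) = join A (join A x y) z) /\
  (forall x y, meet A x y = meet A y x) /\
  (forall x y, join A x y = join A y x) /\
  (forall x y, meet A x (join A x y) = x) /\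
  (forall x y, join A x (meet A x y) = x).

Definition is_unital_groupoid : Prop :=
  forall x, mul A (one A) x = x /\ mul A x (one A) = x.

Definition is_residuated : Prop :=
  forall x y z,
    (le (mul A x y) z <-> le y (ldiv A x z)) /\
    (le y (ldiv A x z) <-> le x (rdiv A z y)).

Definition is_interior : Prop :=
  le (one A) (bang A (one A)) /\
  (forall x y, le (mul A (bang A x) (bang A y)) (bang A (mul A x y))) /\
  (forall x, le (bang A x) x) /\
  (forall x, le (bang A x) (bang A (bang A x))) /\
  (forall x y, le x y -> le (bang A x) (bang A y)).

Definition is_integral : Prop := forall x, le x (one A).

Definition integral_interior_rlu : Prop :=
  is_lattice /\ is_unital_groupoid /\ is_residuated /\ is_interior /\ is_integral.

End Laws.
Arguments le {A} x y.

Inductive Eqn := Eq_e | Eq_c | Eq_bc | Eq_be | Eq_ba1 | Eq_ba2.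

Definition satisfies (A : IGroupoid) (q : Eqn) : Prop :=
  match q with
  | Eq_e   => forall x y : A, le (mul A x y) (mul A y x)
  | Eq_c   => forall x : A, le x (mul A x x)
  | Eq_bc  => forall x : A, le (bang A x) (mul A (bang A x) (bang A x))
  | Eq_be  => forall x y : A, mul A (bang A x) y = mul A y (bang A x)
  | Eq_ba1 => forall x y z : A,
                mul A (bang A x) (mul A y z) = mul A (mul A (bang A x) y) z
  | Eq_ba2 => forall x y z : A,
                mul A x (mul A y (bang A z)) = mul A (mul A x y) (bang A z)
  end.

Definition in_variety (E : Eqn -> Prop) (A : IGroupoid) : Prop :=
  integral_interior_rlu A /\ forall q, E q -> satisfies A q.

Definition finite_type (T : Type) : Prop := exists l : list T, forall x : T, In x l.

Definition finite_subset (T : Type) (B : T -> Prop) : Prop :=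
  exists l : list T, forall x, B x -> In x l.

(* An embedding of the partial subalgebra B of C into D.  The map is given as a
   total function on C; only its values on B matter (D is always inhabited by 1). *)
Definition partial_embedding (C D : IGroupoid) (B : C -> Prop) (h : C -> D) : Prop :=
  (forall x y, B x -> B y -> h x = h y -> x = y) /\
  (forall x y, B x -> B y -> B (meet C x y) -> h (meet C x y) = meet D (h x) (h y)) /\
  (forall x y, B x -> B y -> B (join C x y) -> h (join C x y) = join D (h x) (h y)) /\
  (forall x y, B x -> B y -> B (mul C x y) -> h (mul C x y) = mul D (h x) (h y)) /\
  (forall x y, B x -> B y -> B (ldiv C x y) -> h (ldiv C x y) = ldiv D (h x) (h y)) /\
  (forall x y, B x -> B y -> B (rdiv C x y) -> h (rdiv C x y) = rdiv D (h x) (h y)) /\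
  (B (one C) -> h (one C) = one D) /\
  (forall x, B x -> B (bang C x) -> h (bang C x) = bang D (h x)).

Definition FEP (E : Eqn -> Prop) : Prop :=
  forall (C : IGroupoid), in_variety E C ->
  forall (B : C -> Prop), finite_subset (T:=C) B ->
  exists (D : IGroupoid), in_variety E D /\ finite_type D /\
    exists h : C -> D, partial_embedding C D B h.

From Pilot Require Import Defs.
From Stdlib Require Import List Arith Lia Wf_nat Classical ClassicalEpsilon
  FunctionalExtensionality PropExtensionality ProofIrrelevance.
Import ListNotations.

(* Terms built from the elements of B by 1, *
   and ! form, together with one-hole contexts, a residuated frame over C: a term w is
   related to a pair (u, b) of a context and an element of B when u[w] <= b.  Its Galois
   algebra D of closed sets is an integral interior rlu-groupoid; every equation of E that
   holds in C holds in D, since it can be checked on terms; and b |-> {w | w <= b} embeds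
   B into D.  D is finite because closed sets are intersections of basic sets
   {w | u[w] <= b}, of which there are finitely many: reading contexts as trees,
   homeomorphic embedding is a well-quasi-order (Kruskal's theorem) under which basic
   sets grow, and a strictly increasing chain of basic sets would give a bad sequence of
   witnesses. *)

(** * Well-quasi-orders *)

Definition good {T} (R : T -> T -> Prop) (f : nat -> T) : Prop :=
  exists i j, i < j /\ R (f i) (f j).

Definition wqo_on {T} (P : T -> Prop) (R : T -> T -> Prop) : Prop :=
  forall f, (forall n, P (f n)) -> good R f.

Definition increasing (phi : nat -> nat) : Prop := forall n, phi n < phi (S n).

Lemma increasing_lt phi : increasing phi -> forall i j, i < j -> phi i < phi j.
Proof. intros H i j Hij. induction Hij; [apply H|]. specialize (H m). lia. Qed.

Lemma nat_least (P : nat -> Prop) : (exists n, P n) -> exists n, P n /\ forall m, P m -> n <= m.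
Proof.
  intro Hex.
  destruct (dec_inh_nat_subset_has_unique_least_element P (fun n => classic (P n)) Hex)
    as [n [Hn _]].
  exists n; exact Hn.
Qed.

Lemma increasing_path (N : nat) (R : nat -> nat -> Prop) :
  (forall i, N <= i -> exists j, i < j /\ R i j) ->
  exists phi, increasing phi /\ forall k, N <= phi k /\ R (phi k) (phi (S k)).
Proof.
  intro Hnext.
  assert (Hg : forall i, exists j, N <= i -> i < j /\ R i j).
  { intro i. destruct (le_lt_dec N i) as [Hi|Hi].
    - destruct (Hnext i Hi) as [j Hj]. exists j; auto.
    - exists 0. lia. }
  destruct (choice _ Hg) as [g Hgspec].
  assert (Habove : forall k, N <= Nat.iter k g N).
  { induction k; simpl; [lia|]. destruct (Hgspec _ IHk). lia. }
  exists (fun k => Nat.iter k g N). split.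
  - intro k. apply Hgspec, Habove.
  - intro k. split; [apply Habove | apply Hgspec, Habove].
Qed.

Lemma infinitely_often_or_eventually_not (Q : nat -> Prop) :
  (exists phi, increasing phi /\ forall k, Q (phi k)) \/ (exists N, forall n, N <= n -> ~ Q n).
Proof.
  destruct (classic (forall N, exists n, N <= n /\ Q n)) as [Hinf|Hfin].
  - left.
    destruct (increasing_path 0 (fun _ j => Q j)) as [phi [Hphi Hq]].
    { intros i _. destruct (Hinf (S i)) as [j [Hj Qj]]. exists j. split; [lia | exact Qj]. }
    exists (fun k => phi (S k)). split; [intro k; apply Hphi | intro k; apply Hq].
  - right. apply not_all_ex_not in Hfin as [N HN].
    exists N. intros n Hn Qn. apply HN. eauto.
Qed.

Lemma wqo_chain {T} (P : T -> Prop) R : wqo_on P R -> forall f, (forall n, P (f n)) ->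
  exists phi, increasing phi /\ forall k, R (f (phi k)) (f (phi (S k))).
Proof.
  intros W f Hf.
  destruct (infinitely_often_or_eventually_not
              (fun i => ~ exists j, i < j /\ R (f i) (f j))) as [[phi [Hphi Hterm]] | [N HN]].
  - exfalso. destruct (W (fun k => f (phi k)) (fun k => Hf _)) as [i [j [Hij HR]]].
    apply (Hterm i). exists (phi j). split; [apply increasing_lt|]; auto.
  - destruct (increasing_path N (fun i j => R (f i) (f j))) as [phi [Hphi HR]].
    { intros i Hi. apply NNPP, HN, Hi. }
    exists phi. split; [exact Hphi | apply HR].
Qed.

Lemma wqo_prod {T U} (P : T -> Prop) (Q : U -> Prop) R1 R2 :
  (forall x y z, R1 x y -> R1 y z -> R1 x z) ->
  wqo_on P R1 -> wqo_on Q R2 ->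
  wqo_on (fun p => P (fst p) /\ Q (snd p)) (fun p q => R1 (fst p) (fst q) /\ R2 (snd p) (snd q)).
Proof.
  intros Htrans W1 W2 f Hf.
  destruct (wqo_chain P R1 W1 (fun n => fst (f n)) (fun n => proj1 (Hf n))) as [phi [Hphi HR]].
  destruct (W2 (fun k => snd (f (phi k))) (fun k => proj2 (Hf _))) as [i [j [Hij H2]]].
  exists (phi i), (phi j). split; [apply increasing_lt; auto|]. split; [|exact H2].
  clear H2. induction Hij; [apply HR | eapply Htrans; eauto].
Qed.

Lemma wqo_In {T} (l : list T) : wqo_on (fun x => In x l) eq.
Proof.
  induction l as [|x l IH]; intros f Hf; [destruct (Hf 0)|].
  destruct (infinitely_often_or_eventually_not (fun n => f n = x)) as [[phi [Hphi Hx]]|[N HN]].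
  - exists (phi 0), (phi 1). split; [apply Hphi | congruence].
  - destruct (IH (fun k => f (N + k))) as [i [j [Hij Heq]]].
    { intro k. destruct (Hf (N + k)) as [Hhd|Htl]; [|exact Htl].
      exfalso. apply (HN (N + k)); [lia | auto]. }
    exists (N + i), (N + j). split; [lia | exact Heq].
Qed.

Lemma wqo_In_subtype {T} (l : list T) : wqo_on (fun _ : {x | In x l} => True) eq.
Proof.
  intros f _. destruct (wqo_In l (fun n => proj1_sig (f n)) (fun n => proj2_sig (f n)))
    as [i [j [Hij Heq]]].
  exists i, j. split; [exact Hij|].
  apply eq_sig_hprop; [intros; apply proof_irrelevance | exact Heq].
Qed.

Lemma wqo_eq_finite {T} (P : T -> Prop) : wqo_on P eq -> exists l, forall x, P x -> In x l.
Proof.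
  intro W. apply NNPP; intro Hinf.
  assert (Hnew : forall l, exists x, P x /\ ~ In x l).
  { intro l. apply NNPP; intro H. apply Hinf. exists l. intros x Px. apply NNPP; eauto. }
  destruct (choice _ Hnew) as [pick Hpick].
  set (g := fix g n := match n with 0 => nil | S n => pick (g n) :: g n end).
  assert (Hin : forall i j, i < j -> In (pick (g i)) (g j)).
  { intros i j Hij. induction Hij; simpl; auto. }
  destruct (W (fun n => pick (g n))) as [i [j [Hij Heq]]]; [intro n; apply Hpick|].
  apply (proj2 (Hpick (g j))). rewrite <- Heq. auto.
Qed.

Fixpoint sublists {T} (l : list T) : list (list T) :=
  match l with [] => [[]] | x :: l => map (cons x) (sublists l) ++ sublists l end.

Lemma sublists_filter {T} (P : T -> Prop) (l : list T) :
  exists l', In l' (sublists l) /\ forall x, In x l' <-> In x l /\ P x.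
Proof.
  induction l as [|x l (l' & Hin & Hl')]; simpl.
  - exists []. simpl. intuition.
  - destruct (classic (P x)) as [Hx|Hx].
    + exists (x :: l'). split; [apply in_or_app; left; apply in_map, Hin|].
      intro y. simpl. rewrite Hl'. intuition congruence.
    + exists l'. split; [apply in_or_app; right; exact Hin|].
      intro y. rewrite Hl'. intuition congruence.
Qed.

(** * Kruskal's tree theorem *)

Inductive tree (A : Type) : Type :=
| Eps | Hole | Leaf (a : A) | Mul (t1 t2 : tree A) | Bang (t : tree A).
Arguments Eps {A}. Arguments Hole {A}. Arguments Leaf {A} a.
Arguments Mul {A} t1 t2. Arguments Bang {A} t.

Inductive emb {A} : tree A -> tree A -> Prop :=
| emb_eps : emb Eps Eps
| emb_hole : emb Hole Hole
| emb_leaf a : emb (Leaf a) (Leaf a)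
| emb_mul_l t s1 s2 : emb t s1 -> emb t (Mul s1 s2)
| emb_mul_r t s1 s2 : emb t s2 -> emb t (Mul s1 s2)
| emb_mul t1 t2 s1 s2 : emb t1 s1 -> emb t2 s2 -> emb (Mul t1 t2) (Mul s1 s2)
| emb_bang_r t s : emb t s -> emb t (Bang s)
| emb_bang t s : emb t s -> emb (Bang t) (Bang s).

Fixpoint size {A} (t : tree A) : nat :=
  match t with Mul a b => S (size a + size b) | Bang a => S (size a) | _ => 0 end.

Lemma emb_refl {A} (t : tree A) : emb t t.
Proof. induction t; [constructor..| apply emb_mul | apply emb_bang]; auto. Qed.

Lemma emb_trans {A} (t s r : tree A) : emb t s -> emb s r -> emb t r.
Proof.
  intros Hts Hsr. revert t Hts.
  induction Hsr; intros t0 H0; inversion H0; subst; eauto using emb.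
Qed.

Definition child {A} (s t : tree A) : Prop :=
  (exists r, t = Mul s r) \/ (exists r, t = Mul r s) \/ t = Bang s.

Lemma child_emb {A} (s t : tree A) : child s t -> emb s t.
Proof. intros [[r ->]|[[r ->]| ->]]; constructor; apply emb_refl. Qed.

Lemma child_size {A} (s t : tree A) : child s t -> size s < size t.
Proof. intros [[r ->]|[[r ->]| ->]]; simpl; lia. Qed.

Section MinimalBadSequence.
Variable A : Type.

Definition bad (f : nat -> tree A) : Prop := forall i j, i < j -> ~ emb (f i) (f j).

Definition bad_prefix (l : list (tree A)) : Prop :=
  exists f, bad f /\ forall i, i < length l -> f i = nth i l Eps.

Definition minimal_extension (l : list (tree A)) (t : tree A) : Prop :=
  bad_prefix (l ++ [t]) /\ forall t', bad_prefix (l ++ [t']) -> size t <= size t'.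

Lemma bad_prefix_snoc l f : bad f -> (forall i, i < length l -> f i = nth i l Eps) ->
  bad_prefix (l ++ [f (length l)]).
Proof.
  intros Hf Hl. exists f. split; [exact Hf|]. intros i Hi.
  rewrite length_app in Hi. simpl in Hi.
  destruct (Nat.eq_dec i (length l)) as [->|Hne].
  - rewrite nth_middle. reflexivity.
  - rewrite app_nth1 by lia. apply Hl. lia.
Qed.

Lemma minimal_extension_exists l : bad_prefix l -> exists t, minimal_extension l t.
Proof.
  intros [f [Hf Hl]].
  destruct (nat_least (fun n => exists t, bad_prefix (l ++ [t]) /\ size t = n))
    as [n [[t [Ht Hsize]] Hmin]].
  { eexists; eexists; split; [apply (bad_prefix_snoc l f Hf Hl) | reflexivity]. }
  exists t. split; [exact Ht|]. intros t' Ht'. subst. apply Hmin. eauto.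
Qed.

Definition next (l : list (tree A)) : tree A := epsilon (inhabits Eps) (minimal_extension l).

Fixpoint prefix (n : nat) : list (tree A) :=
  match n with 0 => [] | S n => prefix n ++ [next (prefix n)] end.

Definition mbs (n : nat) : tree A := next (prefix n).

Lemma prefix_length n : length (prefix n) = n.
Proof. induction n; simpl; [|rewrite length_app, IHn; simpl]; lia. Qed.

Lemma prefix_nth n i : i < n -> nth i (prefix n) Eps = mbs i.
Proof.
  induction n as [|n IH]; intro Hi; [lia|]. simpl.
  destruct (Nat.eq_dec i n) as [->|Hne].
  - rewrite <- (prefix_length n) at 1. apply nth_middle.
  - rewrite app_nth1 by (rewrite prefix_length; lia). apply IH. lia.
Qed.

Hypothesis bad_exists : exists f, bad f.

Lemma prefix_bad n : bad_prefix (prefix n) /\ minimal_extension (prefix n) (mbs n).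
Proof.
  unfold mbs, next. induction n as [|n [_ IH]].
  - assert (H0 : bad_prefix []).
    { destruct bad_exists as [f Hf]. exists f. split; [exact Hf | simpl; lia]. }
    split; [exact H0|]. apply epsilon_spec, minimal_extension_exists, H0.
  - split; [apply IH|]. apply epsilon_spec, minimal_extension_exists, IH.
Qed.

Lemma mbs_bad : bad mbs.
Proof.
  intros i j Hij.
  destruct (proj1 (prefix_bad (S j))) as [g [Hg Hgp]]. rewrite prefix_length in Hgp.
  rewrite <- (prefix_nth (S j) i), <- (prefix_nth (S j) j), <- !Hgp by lia.
  apply Hg, Hij.
Qed.

Lemma mbs_minimal n g : bad g -> (forall i, i < n -> g i = mbs i) -> size (mbs n) <= size (g n).
Proof.
  intros Hg Hgm. apply (proj2 (prefix_bad n)).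
  replace n with (length (prefix n)) at 2 by apply prefix_length.
  apply bad_prefix_snoc; [exact Hg|].
  intros i Hi. rewrite prefix_length in Hi. rewrite prefix_nth by exact Hi. auto.
Qed.

End MinimalBadSequence.

Section Kruskal.
Variable A : Type.
Hypothesis labels_wqo : wqo_on (fun _ : A => True) eq.

Lemma mbs_children_wqo : (exists f, bad A f) ->
  wqo_on (fun s => exists n, child s (mbs A n)) emb.
Proof.
  intros Hbad g Hg. apply NNPP; intro Hgbad.
  destruct (choice _ Hg) as [parent Hparent].
  destruct (nat_least (fun n => exists k, parent k = n)) as [N [[k0 Hk0] HN]];
    [exists (parent 0), 0; reflexivity|].
  (* Grafting the tail of [g] from [k0] onto the first [N] terms of [mbs] gives a bad
     sequence whose [N]-th term is a proper subtree of [mbs N]. *)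
  set (h := fun i => if i <? N then mbs A i else g (k0 + (i - N))).
  assert (Hh : bad A h).
  { intros i j Hij He. unfold h in He.
    destruct (Nat.ltb_spec i N), (Nat.ltb_spec j N); try lia.
    - exact (mbs_bad A Hbad i j Hij He).
    - set (k := k0 + (j - N)) in *.
      assert (N <= parent k) by (apply HN; eauto).
      apply (mbs_bad A Hbad i (parent k)); [lia|].
      eapply emb_trans; [exact He | apply child_emb, Hparent].
    - apply Hgbad. exists (k0 + (i - N)), (k0 + (j - N)). split; [lia | exact He]. }
  assert (Hsize : size (mbs A N) <= size (h N)).
  { apply mbs_minimal; [exact Hbad | exact Hh |].
    intros i Hi. unfold h. destruct (Nat.ltb_spec i N); [reflexivity | lia]. }
  assert (HhN : h N = g k0) by (unfold h; rewrite Nat.ltb_irrefl; f_equal; lia).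
  pose proof (child_size _ _ (Hparent k0)) as Hlt.
  rewrite HhN in Hsize. rewrite Hk0 in Hlt. lia.
Qed.

Lemma bad_subsequence m phi : bad A m -> increasing phi -> bad A (fun k => m (phi k)).
Proof. intros Hm Hphi i j Hij. apply Hm, increasing_lt; auto. Qed.

Lemma bad_eventually_leaves (m : nat -> tree A) :
  bad A m -> wqo_on (fun s => exists n, child s (m n)) emb ->
  exists N, forall n, N <= n -> exists a, m n = Leaf a.
Proof.
  intros Hm Wc.
  destruct (infinitely_often_or_eventually_not
              (fun n => exists p, m n = Mul (fst p) (snd p))) as [[phi [Hphi Hq]]|[N1 HN1]].
  { destruct (choice _ Hq) as [p Hp].
    destruct (wqo_prod _ _ _ _ (@emb_trans A) Wc Wc p) as [i [j [Hij [E1 E2]]]].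
    - intro k. split; exists (phi k); rewrite Hp; unfold child; eauto.
    - exfalso. apply (bad_subsequence m phi Hm Hphi i j Hij).
      rewrite !Hp. apply emb_mul; auto. }
  destruct (infinitely_often_or_eventually_not
              (fun n => exists s, m n = Bang s)) as [[phi [Hphi Hq]]|[N2 HN2]].
  { destruct (choice _ Hq) as [b Hb].
    destruct (Wc b) as [i [j [Hij E]]].
    - intro k. exists (phi k). rewrite Hb. unfold child; eauto.
    - exfalso. apply (bad_subsequence m phi Hm Hphi i j Hij).
      rewrite !Hb. apply emb_bang, E. }
  destruct (infinitely_often_or_eventually_not (fun n => m n = Eps))
    as [[phi [Hphi Hq]]|[N3 HN3]].
  { exfalso. apply (bad_subsequence m phi Hm Hphi 0 1); [lia|]. rewrite !Hq. constructor. }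
  destruct (infinitely_often_or_eventually_not (fun n => m n = Hole))
    as [[phi [Hphi Hq]]|[N4 HN4]].
  { exfalso. apply (bad_subsequence m phi Hm Hphi 0 1); [lia|]. rewrite !Hq. constructor. }
  exists (N1 + N2 + N3 + N4). intros n Hn.
  specialize (HN1 n ltac:(lia)). specialize (HN2 n ltac:(lia)).
  specialize (HN3 n ltac:(lia)). specialize (HN4 n ltac:(lia)).
  destruct (m n) as [| |a|s1 s2|s]; eauto; exfalso.
  - apply HN3. reflexivity.
  - apply HN4. reflexivity.
  - apply HN1. exists (s1, s2). reflexivity.
  - apply HN2. eauto.
Qed.

Theorem kruskal : wqo_on (fun _ : tree A => True) emb.
Proof.
  intros f _. apply NNPP; intro Hf.
  assert (Hbad : exists f, bad A f)
    by (exists f; intros i j Hij He; apply Hf; exists i, j; auto).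
  destruct (bad_eventually_leaves (mbs A) (mbs_bad A Hbad) (mbs_children_wqo Hbad))
    as [N HN].
  destruct (choice (fun k a => mbs A (N + k) = Leaf a) (fun k => HN (N + k) ltac:(lia)))
    as [lab Hlab].
  destruct (labels_wqo lab (fun _ => I)) as [i [j [Hij Heq]]].
  apply (mbs_bad A Hbad (N + i) (N + j)); [lia|].
  rewrite !Hlab, Heq. constructor.
Qed.

End Kruskal.

(** * Integral interior rlu-groupoids and their residuated frames *)

Section Frame.
Variable C : IGroupoid.
Hypothesis HC : integral_interior_rlu C.

Local Notation mul := (Defs.mul C).
Local Notation meet := (Defs.meet C).
Local Notation join := (Defs.join C).
Local Notation one := (Defs.one C).
Local Notation bang := (Defs.bang C).

Lemma meetA x y z : meet x (meet y z) = meet (meet x y) z. Proof. apply HC. Qed.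
Lemma joinA x y z : join x (join y z) = join (join x y) z. Proof. apply HC. Qed.
Lemma meetC x y : meet x y = meet y x. Proof. apply HC. Qed.
Lemma joinC x y : join x y = join y x. Proof. apply HC. Qed.
Lemma meetKU x y : meet x (join x y) = x. Proof. apply HC. Qed.
Lemma joinKI x y : join x (meet x y) = x. Proof. apply HC. Qed.

Lemma meetxx x : meet x x = x.
Proof. rewrite <- (joinKI x x) at 2. apply meetKU. Qed.

Lemma le_refl (x : C) : le x x. Proof. apply meetxx. Qed.

Lemma le_trans (x y z : C) : le x y -> le y z -> le x z.
Proof. unfold le. intros H1 H2. rewrite <- H1, <- meetA, H2. reflexivity. Qed.

Lemma le_antisym (x y : C) : le x y -> le y x -> x = y.
Proof. unfold le. intros H1 H2. rewrite <- H1, meetC. exact H2. Qed.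

Lemma le_meetl x y : le (meet x y) x.
Proof. unfold le. rewrite (meetC x y), <- meetA, meetxx. reflexivity. Qed.

Lemma le_meetr x y : le (meet x y) y.
Proof. unfold le. rewrite <- meetA, meetxx. reflexivity. Qed.

Lemma le_meet x y z : le z x -> le z y -> le z (meet x y).
Proof. unfold le. intros H1 H2. rewrite meetA, H1, H2. reflexivity. Qed.

Lemma leEjoin x y : le x y <-> join x y = y.
Proof.
  unfold le; split; intro H.
  - rewrite <- H, joinC, meetC. apply joinKI.
  - rewrite <- H. apply meetKU.
Qed.

Lemma le_joinl x y : le x (join x y). Proof. apply meetKU. Qed.
Lemma le_joinr x y : le y (join x y). Proof. rewrite joinC. apply meetKU. Qed.

Lemma le_join x y z : le x z -> le y z -> le (join x y) z.
Proof. rewrite !leEjoin. intros H1 H2. rewrite <- joinA, H2, H1. reflexivity. Qed.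

Lemma le_ldiv x y z : le (mul x y) z <-> le y (Defs.ldiv C x z).
Proof. apply HC. Qed.

Lemma le_rdiv x y z : le (mul x y) z <-> le x (Defs.rdiv C z y).
Proof. rewrite le_ldiv. apply HC. Qed.

Lemma mul1x x : mul one x = x. Proof. apply HC. Qed.
Lemma mulx1 x : mul x one = x. Proof. apply HC. Qed.
Lemma le_one x : le x one. Proof. apply HC. Qed.

Lemma le_mulr x y y' : le y y' -> le (mul x y) (mul x y').
Proof. intro H. apply le_ldiv. eapply le_trans; [exact H|]. apply le_ldiv, le_refl. Qed.

Lemma le_mull x x' y : le x x' -> le (mul x y) (mul x' y).
Proof. intro H. apply le_rdiv. eapply le_trans; [exact H|]. apply le_rdiv, le_refl. Qed.

Lemma le_mul x x' y y' : le x x' -> le y y' -> le (mul x y) (mul x' y').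
Proof. intros. eapply le_trans; [apply le_mull | apply le_mulr]; eauto. Qed.

Lemma le_mul_projl x y : le (mul x y) x.
Proof. rewrite <- (mulx1 x) at 2. apply le_mulr, le_one. Qed.

Lemma le_mul_projr x y : le (mul x y) y.
Proof. rewrite <- (mul1x y) at 2. apply le_mull, le_one. Qed.

Lemma mul_joinl a b t : le (mul (join a b) t) (join (mul a t) (mul b t)).
Proof. apply le_rdiv, le_join; apply le_rdiv; [apply le_joinl | apply le_joinr]. Qed.

Lemma mul_joinr a b t : le (mul t (join a b)) (join (mul t a) (mul t b)).
Proof. apply le_ldiv, le_join; apply le_ldiv; [apply le_joinl | apply le_joinr]. Qed.

Lemma interior : is_interior C. Proof. apply HC. Qed.

Lemma le_one_bang1 : le one (bang one). Proof. apply interior. Qed.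
Lemma le_mul_bang x y : le (mul (bang x) (bang y)) (bang (mul x y)). Proof. apply interior. Qed.
Lemma le_bang x : le (bang x) x. Proof. apply interior. Qed.
Lemma le_bang_bang x : le (bang x) (bang (bang x)).
Proof. destruct interior as (_ & _ & _ & H & _). apply H. Qed.
Lemma bang_mono x y : le x y -> le (bang x) (bang y).
Proof. destruct interior as (_ & _ & _ & _ & H). apply H. Qed.

Variable A : Type.
Variable val : A -> C.

Local Notation T := (tree A).

Fixpoint evalh (h : C) (t : T) : C :=
  match t with
  | Eps => one | Hole => h | Leaf a => val a
  | Mul t1 t2 => mul (evalh h t1) (evalh h t2) | Bang t1 => bang (evalh h t1)
  end.

Definition eval : T -> C := evalh one.

Inductive ctx := CHole | CMulL (u : ctx) (t : T) | CMulR (t : T) (u : ctx).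

Fixpoint ctx_eval (u : ctx) (x : C) : C :=
  match u with
  | CHole => x
  | CMulL u t => ctx_eval u (mul x (eval t))
  | CMulR t u => ctx_eval u (mul (eval t) x)
  end.

Definition basic (u : ctx) (a : A) (w : T) : Prop := le (ctx_eval u (eval w)) (val a).

Definition cl (X : T -> Prop) (w : T) : Prop :=
  forall u a, (forall v, X v -> basic u a v) -> basic u a w.

Definition closed (X : T -> Prop) : Prop := forall w, cl X w -> X w.

Lemma ctx_eval_mono u : forall x y, le x y -> le (ctx_eval u x) (ctx_eval u y).
Proof. induction u; intros x y H; simpl; auto using le_mull, le_mulr. Qed.

Lemma ctx_eval_join u : forall x y d, le (ctx_eval u x) d -> le (ctx_eval u y) d ->
  le (ctx_eval u (join x y)) d.
Proof.
  induction u; intros x y d H1 H2; simpl in *; [apply le_join; auto| |];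
    (eapply le_trans; [apply ctx_eval_mono | apply (IHu _ _ _ H1 H2)]).
  - apply mul_joinl.
  - apply mul_joinr.
Qed.

Lemma cl_incl X w : X w -> cl X w.
Proof. intros H u a Hu. auto. Qed.

Lemma cl_closed X : closed (cl X).
Proof. intros w Hw u a H. apply Hw. intros v Hv. apply Hv, H. Qed.

Lemma cl_min X Y : closed Y -> (forall w, X w -> Y w) -> forall w, cl X w -> Y w.
Proof. intros HY HXY w Hw. apply HY. intros u a H. apply Hw. intros v Hv. apply H, HXY, Hv. Qed.

Lemma cl_sub X Y : (forall w, X w -> cl Y w) -> forall w, cl X w -> cl Y w.
Proof. intro H. apply cl_min; [apply cl_closed | exact H]. Qed.

Lemma basic_closed u a : closed (basic u a).
Proof. intros w Hw. apply Hw. auto. Qed.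

Lemma closed_down X v w : closed X -> X v -> le (eval w) (eval v) -> X w.
Proof.
  intros HX Hv Hle. apply HX. intros u a H.
  eapply le_trans; [apply ctx_eval_mono, Hle | apply H, Hv].
Qed.

Lemma cl_down X v w : cl X v -> le (eval w) (eval v) -> cl X w.
Proof. intros. eapply closed_down; eauto using cl_closed. Qed.

Lemma closed_mull Z t : closed Z -> closed (fun p => Z (Mul p t)).
Proof. intros HZ p Hp. apply HZ. intros u a H. exact (Hp (CMulL u t) a (fun v Hv => H _ Hv)). Qed.

Lemma closed_mulr Z t : closed Z -> closed (fun p => Z (Mul t p)).
Proof. intros HZ p Hp. apply HZ. intros u a H. exact (Hp (CMulR t u) a (fun v Hv => H _ Hv)). Qed.

(* [cl] is a nucleus: cl X * cl Y is contained in cl (X * Y). *)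
Lemma closed_mul_cl X Y Z : closed Z -> (forall a b, X a -> Y b -> Z (Mul a b)) ->
  forall p q, cl X p -> cl Y q -> Z (Mul p q).
Proof.
  intros HZ H p q Hp Hq.
  assert (Hpb : forall b, Y b -> Z (Mul p b)).
  { intros b Hb. revert p Hp. apply (cl_min X (fun p => Z (Mul p b))); auto using closed_mull. }
  revert q Hq. apply (cl_min Y (fun q => Z (Mul p q))); auto using closed_mulr.
Qed.

Record closed_set := ClosedSet { cset :> T -> Prop; csetP : closed cset }.

Lemma closed_set_ext (X Y : closed_set) : (forall w, X w <-> Y w) -> X = Y.
Proof.
  destruct X as [X HX], Y as [Y HY]. simpl. intro H.
  assert (X = Y) as <-
    by (apply functional_extensionality; intro; apply propositional_extensionality; auto).
  f_equal. apply proof_irrelevance.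
Qed.

Definition star (X Y : T -> Prop) (w : T) : Prop := exists a b, X a /\ Y b /\ w = Mul a b.
Definition bangs (X : T -> Prop) (w : T) : Prop := exists v, X v /\ w = Bang v.

Lemma closed_meet (X Y : closed_set) : closed (fun w => X w /\ Y w).
Proof.
  intros w Hw. split; [apply (csetP X) | apply (csetP Y)];
    revert w Hw; apply cl_sub; intros v [H1 H2]; apply cl_incl; assumption.
Qed.

Lemma closed_ldiv (X Z : closed_set) : closed (fun y => forall x, X x -> Z (Mul x y)).
Proof.
  intros w Hw x Hx. apply (closed_mulr _ x (csetP Z)).
  revert w Hw. apply cl_sub. intros v Hv. apply cl_incl, Hv, Hx.
Qed.

Lemma closed_rdiv (Z Y : closed_set) : closed (fun x => forall y, Y y -> Z (Mul x y)).
Proof.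
  intros w Hw y Hy. apply (closed_mull _ y (csetP Z)).
  revert w Hw. apply cl_sub. intros v Hv. apply cl_incl, Hv, Hy.
Qed.

Lemma closed_all : closed (fun _ => True).
Proof. intros w _. exact I. Qed.

Definition dmeet (X Y : closed_set) := ClosedSet _ (closed_meet X Y).
Definition djoin (X Y : closed_set) := ClosedSet (cl (fun w => X w \/ Y w)) (cl_closed _).
Definition dmul (X Y : closed_set) := ClosedSet (cl (star X Y)) (cl_closed _).
Definition dldiv (X Z : closed_set) := ClosedSet _ (closed_ldiv X Z).
Definition drdiv (Z Y : closed_set) := ClosedSet _ (closed_rdiv Z Y).
Definition dtop := ClosedSet _ closed_all.
Definition dbang (X : closed_set) := ClosedSet (cl (bangs X)) (cl_closed _).

Definition D : IGroupoid := @Build_IGroupoid closed_set dmeet djoin dmul dldiv drdiv dtop dbang.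

Lemma eval_eps : eval Eps = one. Proof. reflexivity. Qed.
Lemma eval_mul a b : eval (Mul a b) = mul (eval a) (eval b). Proof. reflexivity. Qed.
Lemma eval_bang a : eval (Bang a) = bang (eval a). Proof. reflexivity. Qed.

Lemma leD (X Y : closed_set) : @le D X Y <-> (forall w, X w -> Y w).
Proof.
  unfold le; split.
  - intros H w Hw. rewrite <- H in Hw. apply Hw.
  - intro H. apply closed_set_ext. simpl. intuition.
Qed.

Lemma dmul_intro (X Y : closed_set) a b : X a -> Y b -> dmul X Y (Mul a b).
Proof. intros Ha Hb. apply cl_incl. exists a, b. auto. Qed.

Lemma dbang_intro (X : closed_set) v : X v -> dbang X (Bang v).
Proof. intro Hv. apply cl_incl. exists v. auto. Qed.

Lemma dmul_min (X Y : closed_set) (Z : T -> Prop) : closed Z ->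
  (forall a b, X a -> Y b -> Z (Mul a b)) -> forall w, dmul X Y w -> Z w.
Proof. intros HZ H. apply cl_min; [exact HZ|]. intros w (a & b & Ha & Hb & ->). auto. Qed.

Lemma dbang_min (X : closed_set) (Z : T -> Prop) : closed Z ->
  (forall v, X v -> Z (Bang v)) -> forall w, dbang X w -> Z w.
Proof. intros HZ H. apply cl_min; [exact HZ|]. intros w (v & Hv & ->). auto. Qed.

Lemma cl_star_min X0 Y0 (X Y Z : T -> Prop) : closed Z ->
  (forall a, X a -> cl X0 a) -> (forall b, Y b -> cl Y0 b) ->
  (forall a b, X0 a -> Y0 b -> Z (Mul a b)) -> forall w, cl (star X Y) w -> Z w.
Proof.
  intros HZ HX HY H. apply cl_min; [exact HZ|]. intros w (a & b & Ha & Hb & ->).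
  apply (closed_mul_cl X0 Y0); auto.
Qed.

Lemma D_lattice : is_lattice D.
Proof.
  repeat split.
  - intros X Y Z. apply closed_set_ext. simpl. tauto.
  - intros X Y Z. apply closed_set_ext. intro w. simpl. split; apply cl_sub.
    + intros v [H|H].
      * apply cl_incl; left; apply cl_incl; left; exact H.
      * revert v H. apply cl_sub. intros v [H|H]; apply cl_incl;
          [left; apply cl_incl; right | right]; exact H.
    + intros v [H|H].
      * revert v H. apply cl_sub. intros v [H|H]; apply cl_incl;
          [left | right; apply cl_incl; left]; exact H.
      * apply cl_incl; right; apply cl_incl; right; exact H.
  - intros X Y. apply closed_set_ext. simpl. tauto.
  - intros X Y. apply closed_set_ext. intro w. simpl.
    split; apply cl_sub; intros v Hv; apply cl_incl; tauto.
  - intros X Y. apply closed_set_ext. intro w. simpl.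
    split; [tauto|]. intro H. split; [exact H | apply cl_incl; left; exact H].
  - intros X Y. apply closed_set_ext. intro w. simpl. split.
    + apply cl_min; [apply csetP | tauto].
    + intro H. apply cl_incl. left. exact H.
Qed.

Lemma D_unital : is_unital_groupoid D.
Proof.
  intro X. split; apply closed_set_ext; intro w; split.
  - apply dmul_min; [apply csetP|]. intros a b _ Hb.
    apply (closed_down _ b); [apply csetP | exact Hb | apply le_mul_projr].
  - intro Hw. apply (cl_down _ (Mul Eps w)); [apply dmul_intro; simpl; auto|].
    rewrite eval_mul, eval_eps, mul1x. apply le_refl.
  - apply dmul_min; [apply csetP|]. intros a b Ha _.
    apply (closed_down _ a); [apply csetP | exact Ha | apply le_mul_projl].
  - intro Hw. apply (cl_down _ (Mul w Eps)); [apply dmul_intro; simpl; auto|].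
    rewrite eval_mul, eval_eps, mulx1. apply le_refl.
Qed.

Lemma D_residuated : is_residuated D.
Proof.
  intros X Y Z. rewrite !leD. simpl. split; split.
  - intros H y Hy x Hx. apply H, dmul_intro; assumption.
  - intro H. apply dmul_min; [apply csetP|]. intros a b Ha Hb. apply H; assumption.
  - intros H x Hx y Hy. apply H; assumption.
  - intros H y Hy x Hx. apply H; assumption.
Qed.

Lemma D_integral : is_integral D.
Proof. intro X. apply leD. simpl. auto. Qed.

Lemma D_interior : is_interior D.
Proof.
  repeat split.
  - apply leD. intros w _. apply (cl_down _ (Bang Eps)); [apply dbang_intro; exact I|].
    rewrite eval_bang, eval_eps. eapply le_trans; [apply le_one | apply le_one_bang1].
  - intros X Y. apply leD. apply dmul_min; [apply cl_closed|].
    apply closed_mul_cl; [apply cl_closed|]. intros a b (v & Hv & ->) (v' & Hv' & ->).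
    apply (cl_down _ (Bang (Mul v v'))); [apply dbang_intro, dmul_intro; assumption|].
    rewrite !eval_bang, !eval_mul, !eval_bang. apply le_mul_bang.
  - intro X. apply leD. apply dbang_min; [apply csetP|]. intros v Hv.
    apply (closed_down _ v); [apply csetP | exact Hv | apply le_bang].
  - intro X. apply leD. apply dbang_min; [apply cl_closed|]. intros v Hv.
    apply (cl_down _ (Bang (Bang v))); [apply dbang_intro, dbang_intro, Hv|].
    rewrite !eval_bang. apply le_bang_bang.
  - intros X Y. rewrite !leD. intro H. apply dbang_min; [apply cl_closed|].
    intros v Hv. apply dbang_intro, H, Hv.
Qed.

Lemma D_integral_interior_rlu : integral_interior_rlu D.
Proof. exact (conj D_lattice (conj D_unital (conj D_residuated (conj D_interior D_integral)))). Qed.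

Lemma D_satisfies_e : satisfies C Eq_e -> satisfies D Eq_e.
Proof.
  intros HE X Y. apply leD. apply dmul_min; [apply cl_closed|]. intros a b Ha Hb.
  apply (cl_down _ (Mul b a)); [apply dmul_intro; assumption|].
  rewrite !eval_mul. apply HE.
Qed.

Lemma D_satisfies_c : satisfies C Eq_c -> satisfies D Eq_c.
Proof.
  intros HE X. apply leD. intros w Hw.
  apply (cl_down _ (Mul w w)); [apply dmul_intro; assumption|].
  rewrite eval_mul. apply HE.
Qed.

Lemma D_satisfies_bc : satisfies C Eq_bc -> satisfies D Eq_bc.
Proof.
  intros HE X. apply leD. apply dbang_min; [apply cl_closed|]. intros v Hv.
  apply (cl_down _ (Mul (Bang v) (Bang v))); [apply dmul_intro; apply dbang_intro, Hv|].
  rewrite eval_mul, !eval_bang. apply HE.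
Qed.

Lemma D_satisfies_be : satisfies C Eq_be -> satisfies D Eq_be.
Proof.
  intros HE X Y. apply closed_set_ext. intro w. split.
  - apply (cl_star_min (bangs X) Y); [apply cl_closed | auto | apply cl_incl |].
    intros a b (v & Hv & ->) Hb.
    apply (cl_down _ (Mul b (Bang v))); [apply dmul_intro, dbang_intro; assumption|].
    rewrite !eval_mul, eval_bang, HE. apply le_refl.
  - apply (cl_star_min Y (bangs X)); [apply cl_closed | apply cl_incl | auto |].
    intros a b Ha (v & Hv & ->).
    apply (cl_down _ (Mul (Bang v) a)); [apply dmul_intro; [apply dbang_intro|]; assumption|].
    rewrite !eval_mul, eval_bang, HE. apply le_refl.
Qed.

Lemma D_satisfies_ba1 : satisfies C Eq_ba1 -> satisfies D Eq_ba1.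
Proof.
  intros HE X Y Z. apply closed_set_ext. intro w. split.
  - apply (cl_star_min (bangs X) (star Y Z)); [apply cl_closed | auto | auto |].
    intros a b (v & Hv & ->) (y & z & Hy & Hz & ->).
    apply (cl_down _ (Mul (Mul (Bang v) y) z));
      [apply dmul_intro; [apply dmul_intro; [apply dbang_intro|]|]; assumption|].
    rewrite !eval_mul, eval_bang, HE. apply le_refl.
  - apply (cl_star_min (star (dbang X) Y) Z); [apply cl_closed | auto | apply cl_incl |].
    intros a z (p & y & Hp & Hy & ->) Hz. revert p Hp.
    apply (dbang_min X (fun p => dmul (dbang X) (dmul Y Z) (Mul (Mul p y) z))).
    { apply (closed_mull (fun q => dmul (dbang X) (dmul Y Z) (Mul q z))).
      apply closed_mull, cl_closed. }
    intros v Hv.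
    apply (cl_down _ (Mul (Bang v) (Mul y z)));
      [apply dmul_intro; [apply dbang_intro | apply dmul_intro]; assumption|].
    rewrite !eval_mul, eval_bang, HE. apply le_refl.
Qed.

Lemma D_satisfies_ba2 : satisfies C Eq_ba2 -> satisfies D Eq_ba2.
Proof.
  intros HE X Y Z. apply closed_set_ext. intro w. split.
  - apply (cl_star_min X (star Y (dbang Z))); [apply cl_closed | apply cl_incl | auto |].
    intros x b Hx (y & p & Hy & Hp & ->). revert p Hp.
    apply (dbang_min Z (fun p => dmul (dmul X Y) (dbang Z) (Mul x (Mul y p)))).
    { apply (closed_mulr (fun q => dmul (dmul X Y) (dbang Z) (Mul x q))).
      apply closed_mulr, cl_closed. }
    intros v Hv.
    apply (cl_down _ (Mul (Mul x y) (Bang v)));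
      [apply dmul_intro; [apply dmul_intro | apply dbang_intro]; assumption|].
    rewrite !eval_mul, eval_bang, HE. apply le_refl.
  - apply (cl_star_min (star X Y) (bangs Z)); [apply cl_closed | auto | auto |].
    intros a b (x & y & Hx & Hy & ->) (v & Hv & ->).
    apply (cl_down _ (Mul x (Mul y (Bang v))));
      [apply dmul_intro; [|apply dmul_intro; [|apply dbang_intro]]; assumption|].
    rewrite !eval_mul, eval_bang, HE. apply le_refl.
Qed.

Lemma D_satisfies q : satisfies C q -> satisfies D q.
Proof.
  destruct q; [apply D_satisfies_e | apply D_satisfies_c | apply D_satisfies_bc
    | apply D_satisfies_be | apply D_satisfies_ba1 | apply D_satisfies_ba2].
Qed.

(** * Embedding and finiteness *)

Definition embed (c : C) : closed_set := ClosedSet (cl (fun w => le (eval w) c)) (cl_closed _).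

Definition in_range (c : C) : Prop := exists a, val a = c.

(* For [c = val a] the principal set {w | eval w <= c} is already closed: it is [basic CHole a]. *)
Lemma embed_spec c : in_range c -> forall w, embed c w <-> le (eval w) c.
Proof.
  intros [a <-] w. split; [|exact (cl_incl _ w)].
  intro Hw. apply (Hw CHole a). auto.
Qed.

Lemma embed_leaf c : in_range c -> exists a, embed c (Leaf a) /\ eval (Leaf a) = c.
Proof.
  intros [a <-]. exists a. split; [|reflexivity].
  apply embed_spec; [exists a; reflexivity | apply le_refl].
Qed.

Lemma embed_inj b c : in_range b -> in_range c -> embed b = embed c -> b = c.
Proof.
  intros Hb Hc E.
  destruct (embed_leaf b Hb) as [ab [Hab Eb]], (embed_leaf c Hc) as [ac [Hac Ec]].
  apply le_antisym.
  - rewrite E, (embed_spec c Hc), Eb in Hab. exact Hab.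
  - rewrite <- E, (embed_spec b Hb), Ec in Hac. exact Hac.
Qed.

Lemma embed_meet b c : in_range b -> in_range c -> in_range (meet b c) ->
  embed (meet b c) = dmeet (embed b) (embed c).
Proof.
  intros Hb Hc Hbc. apply closed_set_ext. intro w.
  change (embed (meet b c) w <-> embed b w /\ embed c w).
  rewrite !embed_spec by assumption. split.
  - intro H. split; (eapply le_trans; [exact H|]); [apply le_meetl | apply le_meetr].
  - intros [H1 H2]. apply le_meet; assumption.
Qed.

(* Contexts preserve binary joins ([ctx_eval_join]), so every basic set containing the
   generators of [b] and [c] contains all terms below [join b c]. *)
Lemma embed_join b c : in_range b -> in_range c -> in_range (join b c) ->
  embed (join b c) = djoin (embed b) (embed c).
Proof.
  intros Hb Hc Hbc. apply closed_set_ext. intro w. rewrite embed_spec by assumption. split.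
  - intros Hw u a H.
    destruct (embed_leaf b Hb) as [ab [Hab Eb]], (embed_leaf c Hc) as [ac [Hac Ec]].
    pose proof (H _ (or_introl Hab)) as H1. pose proof (H _ (or_intror Hac)) as H2.
    unfold basic in *. rewrite Eb in H1. rewrite Ec in H2.
    eapply le_trans; [apply ctx_eval_mono, Hw | apply ctx_eval_join; assumption].
  - intro Hw. apply (embed_spec _ Hbc). revert w Hw. apply cl_min; [apply csetP|].
    intros v [Hv|Hv]; apply (embed_spec _ Hbc).
    + apply (embed_spec _ Hb) in Hv. eapply le_trans; [exact Hv | apply le_joinl].
    + apply (embed_spec _ Hc) in Hv. eapply le_trans; [exact Hv | apply le_joinr].
Qed.

Lemma embed_mul b c : in_range b -> in_range c -> in_range (mul b c) ->
  embed (mul b c) = dmul (embed b) (embed c).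
Proof.
  intros Hb Hc Hbc. apply closed_set_ext. intro w. rewrite embed_spec by assumption. split.
  - intro Hw. destruct (embed_leaf b Hb) as [ab [Hab Eb]], (embed_leaf c Hc) as [ac [Hac Ec]].
    apply (cl_down _ (Mul (Leaf ab) (Leaf ac))); [apply dmul_intro; assumption|].
    rewrite eval_mul, Eb, Ec. exact Hw.
  - intro Hw. apply (embed_spec _ Hbc). revert w Hw. apply dmul_min; [apply csetP|].
    intros x y Hx Hy. apply (embed_spec _ Hbc).
    apply (embed_spec _ Hb) in Hx. apply (embed_spec _ Hc) in Hy.
    rewrite eval_mul. apply le_mul; assumption.
Qed.

Lemma embed_ldiv b c : in_range b -> in_range c -> in_range (Defs.ldiv C b c) ->
  embed (Defs.ldiv C b c) = dldiv (embed b) (embed c).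
Proof.
  intros Hb Hc Hbc. apply closed_set_ext. intro w.
  change (embed (Defs.ldiv C b c) w <-> forall x, embed b x -> embed c (Mul x w)).
  rewrite embed_spec by assumption. split.
  - intros Hw x Hx. apply (embed_spec _ Hb) in Hx. apply (embed_spec _ Hc).
    rewrite eval_mul. eapply le_trans; [apply le_mull, Hx | apply le_ldiv, Hw].
  - intro H. destruct (embed_leaf b Hb) as [ab [Hab Eb]].
    specialize (H _ Hab). apply (embed_spec _ Hc) in H.
    rewrite eval_mul, Eb in H. apply le_ldiv, H.
Qed.

Lemma embed_rdiv b c : in_range b -> in_range c -> in_range (Defs.rdiv C c b) ->
  embed (Defs.rdiv C c b) = drdiv (embed c) (embed b).
Proof.
  intros Hb Hc Hbc. apply closed_set_ext. intro w.
  change (embed (Defs.rdiv C c b) w <-> forall y, embed b y -> embed c (Mul w y)).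
  rewrite embed_spec by assumption. split.
  - intros Hw y Hy. apply (embed_spec _ Hb) in Hy. apply (embed_spec _ Hc).
    rewrite eval_mul. eapply le_trans; [apply le_mulr, Hy | apply le_rdiv, Hw].
  - intro H. destruct (embed_leaf b Hb) as [ab [Hab Eb]].
    specialize (H _ Hab). apply (embed_spec _ Hc) in H.
    rewrite eval_mul, Eb in H. apply le_rdiv, H.
Qed.

Lemma embed_one : embed one = dtop.
Proof. apply closed_set_ext. intro w. split; [constructor | intros _; apply cl_incl, le_one]. Qed.

Lemma embed_bang b : in_range b -> in_range (bang b) -> embed (bang b) = dbang (embed b).
Proof.
  intros Hb Hbb. apply closed_set_ext. intro w. rewrite embed_spec by assumption. split.
  - intro Hw. destruct (embed_leaf b Hb) as [ab [Hab Eb]].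
    apply (cl_down _ (Bang (Leaf ab))); [apply dbang_intro, Hab|].
    rewrite eval_bang, Eb. exact Hw.
  - intro Hw. apply (embed_spec _ Hbb). revert w Hw. apply dbang_min; [apply csetP|].
    intros v Hv. apply (embed_spec _ Hbb). apply (embed_spec _ Hb) in Hv.
    rewrite eval_bang. apply bang_mono, Hv.
Qed.

Lemma embed_partial_embedding (B : C -> Prop) :
  (forall c, B c -> in_range c) -> partial_embedding C D B embed.
Proof.
  intro HB. repeat split; intros; auto using embed_inj, embed_meet, embed_join,
    embed_mul, embed_ldiv, embed_rdiv, embed_one, embed_bang.
Qed.

Fixpoint subst (s r : T) : T :=
  match s with
  | Hole => r | Mul s1 s2 => Mul (subst s1 r) (subst s2 r) | Bang s1 => Bang (subst s1 r)
  | _ => s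
  end.

(* A context is encoded as a tree whose holes mark its hole; the subterms it carries are
   first made hole-free, since only their values [eval t] matter. *)
Fixpoint ctx_tree (u : ctx) : T :=
  match u with
  | CHole => Hole
  | CMulL u t => subst (ctx_tree u) (Mul Hole (subst t Eps))
  | CMulR t u => subst (ctx_tree u) (Mul (subst t Eps) Hole)
  end.

Lemma evalh_subst x s r : evalh x (subst s r) = evalh (evalh x r) s.
Proof. induction s; simpl; congruence. Qed.

Lemma evalh_ctx_tree u : forall x, evalh x (ctx_tree u) = ctx_eval u x.
Proof.
  induction u; intro x; simpl; [reflexivity | |]; rewrite evalh_subst; simpl;
    rewrite evalh_subst; apply IHu.
Qed.

Lemma emb_evalh t s : emb t s -> forall x, le (evalh x s) (evalh x t).
Proof.
  induction 1; intro x; simpl; try apply le_refl.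
  - eapply le_trans; [apply le_mul_projl | auto].
  - eapply le_trans; [apply le_mul_projr | auto].
  - apply le_mul; auto.
  - eapply le_trans; [apply le_bang | auto].
  - apply bang_mono; auto.
Qed.

Lemma basic_emb u u' a w : emb (ctx_tree u) (ctx_tree u') -> basic u a w -> basic u' a w.
Proof.
  unfold basic. intros He H. eapply le_trans; [|exact H].
  rewrite <- !evalh_ctx_tree. apply emb_evalh, He.
Qed.

Definition is_basic (S : T -> Prop) : Prop := exists u a, S = basic u a.

Hypothesis labels_wqo : wqo_on (fun _ : A => True) eq.

(* Witnesses of strict growth would form a bad sequence of terms. *)
Lemma basic_chain_stabilizes (X : nat -> T -> Prop) : (forall k, is_basic (X k)) ->
  (forall k w, X k w -> X (S k) w) -> exists k, forall w, X (S k) w -> X k w.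
Proof.
  intros Hbasic Hchain. apply NNPP. intro Hstrict.
  assert (Hwit : forall k, exists w, X (S k) w /\ ~ X k w).
  { intro k. apply NNPP. intro H. apply Hstrict. exists k. intros w Hw.
    apply NNPP. intro Hn. apply H. eauto. }
  destruct (choice _ Hwit) as [ws Hws].
  assert (Hmono : forall k l, k <= l -> forall w, X k w -> X l w)
    by (intros k l Hkl; induction Hkl; auto).
  destruct (kruskal A labels_wqo ws (fun _ => I)) as [i [j [Hij He]]].
  apply (proj2 (Hws j)), (Hmono (S i) j Hij).
  destruct (Hbasic (S i)) as (u & a & Hu).
  apply (closed_down _ (ws i)); [rewrite Hu; apply basic_closed | apply Hws | apply emb_evalh, He].
Qed.

Lemma basic_wqo : wqo_on is_basic eq.
Proof.
  intros f Hf.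
  assert (Hf' : forall n, exists p : ctx * A, f n = basic (fst p) (snd p))
    by (intro n; destruct (Hf n) as (u & a & E); exists (u, a); exact E).
  destruct (choice _ Hf') as [p Hp].
  pose proof (wqo_prod (fun _ : A => True) (fun _ : T => True) eq emb
    (fun x y z (Hxy : x = y) Hyz => eq_trans Hxy Hyz) labels_wqo (kruskal A labels_wqo)) as W.
  destruct (wqo_chain _ _ W (fun k => (snd (p k), ctx_tree (fst (p k))))) as [phi [Hphi Hemb]];
    [intro n; split; exact I|].
  assert (Hstep : forall k w, f (phi k) w -> f (phi (S k)) w).
  { intros k w. rewrite !Hp. destruct (Hemb k) as [Ea Eu]. simpl in Ea, Eu. rewrite Ea.
    apply basic_emb, Eu. }
  destruct (basic_chain_stabilizes (fun k => f (phi k)) (fun k => Hf (phi k)) Hstep) as [k Hk].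
  exists (phi k), (phi (S k)). split; [apply Hphi|].
  apply functional_extensionality. intro w.
  apply propositional_extensionality. split; [apply Hstep | apply Hk].
Qed.

Lemma closed_basics (l : list (T -> Prop)) :
  closed (fun w => forall S, In S l -> is_basic S -> S w).
Proof.
  intros w Hw S HS (u & a & ->). apply Hw. intros v Hv.
  apply Hv; [exact HS | exists u, a; reflexivity].
Qed.

Definition meet_basics (l : list (T -> Prop)) : closed_set := ClosedSet _ (closed_basics l).

Lemma D_finite : finite_type D.
Proof.
  destruct (wqo_eq_finite is_basic basic_wqo) as [basics Hbasics].
  exists (map meet_basics (sublists basics)). intro X.
  destruct (sublists_filter (fun S => forall w, X w -> S w) basics) as (l & Hl & Hmem).
  replace X with (meet_basics l); [apply in_map, Hl|].
  apply closed_set_ext. intro w. simpl. split.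
  - intro Hw. apply (csetP X). intros u a H. apply Hw; [|exists u, a; reflexivity].
    apply Hmem. split; [apply Hbasics; exists u, a; reflexivity | exact H].
  - intros Hw S HS _. apply (proj1 (Hmem S) HS), Hw.
Qed.

End Frame.

Theorem mainTheorem4 (E : Eqn -> Prop) : FEP E.
Proof.
  intros C [HC HE] B [l Hl].
  pose (val := @proj1_sig C (fun c => In c l)).
  exists (D C _ val). split; [split|split].
  - apply D_integral_interior_rlu, HC.
  - intros q Hq. apply D_satisfies; [exact HC | apply HE, Hq].
  - apply D_finite; [exact HC | apply wqo_In_subtype].
  - exists (embed C _ val). apply embed_partial_embedding; [exact HC|].
    intros c Hc. exists (exist _ c (Hl c Hc)). reflexivity.
Qed.
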